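(* Let $(X,Y)\sim P_{X,Y}$ be random variables in $\{0,1\}\times\mathcal{Y}$, $\mathcal{Y}=\{1,\dots,|\mathcal{Y}|\}$ with $|\mathcal{Y}|\ge 2$. For $i\neq j\in\mathcal{Y}$ let $f_{ij}$ be the map sending $i$ and $j$ to a common new symbol $y'\notin\mathcal{Y}$ and fixing every other symbol. Then there exist $i\neq j\in\mathcal{Y}$ such that \[ I(X;Y)-I(X;f_{ij}(Y))\leq\frac{128}{|\mathcal{Y}|^3}. \]
   Context: Logarithms (and mutual informations) are natural. *)

From mathcomp Require Import all_boot all_order all_algebra.
From mathcomp Require Import all_classical all_reals all_analysis.
Set Implicit Arguments. Unset Strict Implicit. Unset Printing Implicit Defensive.
Import Order.TTheory GRing.Theory Num.Theory.
Local Open Scope ring_scope.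

Section Info.
Variable R : realType.

Definition is_joint_pmf (A B : finType) (P : A -> B -> R) : Prop :=
  (forall a b, 0 <= P a b) /\ \sum_(a : A) \sum_(b : B) P a b = 1.

Definition margX (A B : finType) (P : A -> B -> R) (a : A) : R :=
  \sum_(b : B) P a b.
Definition margY (A B : finType) (P : A -> B -> R) (b : B) : R :=
  \sum_(a : A) P a b.

Definition mutual_info (A B : finType) (P : A -> B -> R) : R :=
  \sum_(a : A) \sum_(b : B)
    (if P a b == 0 then 0
     else P a b * ln (P a b / (margX P a * margY P b))).

Definition push_Y (A B C : finType) (f : B -> C) (P : A -> B -> R) : A -> C -> R :=
  fun a c => \sum_(b : B | f b == c) P a b.
End Info.

Definition merge_sym (n : nat) (i j : 'I_n) (y : 'I_n) : option 'I_n :=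
  if (y == i) || (y == j) then None else Some y.

From mathcomp Require Import all_boot all_order all_algebra.
From mathcomp Require Import all_classical all_reals all_analysis.
From mathcomp.algebra_tactics Require Import ring lra.
From mathcomp Require Import zify.
Set Implicit Arguments. Unset Strict Implicit. Unset Printing Implicit Defensive.
Import Order.TTheory GRing.Theory Num.Theory.
Local Open Scope ring_scope.

(** Write p_y for the law of Y and P(.|y) for the conditional law of X.  Merging
  i and j changes only the i- and j-terms of I(X;Y), and [ln t <= t - 1] bounds
  the loss by (p_i + p_j) * sum_x (sqrt P(x|i) - sqrt P(x|j))^2.  For binary X
  the point (sqrt P(1|y), sqrt P(0|y)) lies on the unit quarter circle, where
  this squared distance is at most (z_i - z_j)^2 with
  z_y = sqrt P(1|y) - sqrt P(0|y) in [-1, 1].  At most n/4 symbols have mass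
  above 4/n, so m + 1 symbols of mass at most 4/n remain, with n <= 2m; by
  pigeonhole on m bins of [-1, 1] two of them satisfy |z_i - z_j| <= 2/m, and the
  loss is at most (8/n) (4/m^2) <= 128/n^3.  A symbol of mass 0 can be merged with
  any other at no loss. *)

Lemma chi2_merge_le (R : rcfType) (a b p q : R) :
  0 <= a -> 0 <= b -> 0 < a + b -> 0 < p -> 0 < q ->
  a * (a * (p + q) / (p * (a + b)) - 1) + b * (b * (p + q) / (q * (a + b)) - 1) <=
  (p + q) * (Num.sqrt (a / p) - Num.sqrt (b / q)) ^+ 2.
Proof.
move=> a_ge0 b_ge0 ab_gt0 p_gt0 q_gt0.
set sa := Num.sqrt (a / p); set sb := Num.sqrt (b / q).
have aE : a = p * sa ^+ 2.
  by rewrite /sa sqr_sqrtr ?(divr_ge0 a_ge0 (ltW p_gt0)) // mulrC divfK ?gt_eqF.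
have bE : b = q * sb ^+ 2.
  by rewrite /sb sqr_sqrtr ?(divr_ge0 b_ge0 (ltW q_gt0)) // mulrC divfK ?gt_eqF.
have -> : a * (a * (p + q) / (p * (a + b)) - 1) + b * (b * (p + q) / (q * (a + b)) - 1)
    = p * q * (sa ^+ 2 - sb ^+ 2) ^+ 2 / (a + b).
  by rewrite aE bE; field; rewrite -aE -bE !gt_eqF.
rewrite ler_pdivrMr //.
have -> : (p + q) * (sa - sb) ^+ 2 * (a + b) =
    p * q * (sa ^+ 2 - sb ^+ 2) ^+ 2 + (sa - sb) ^+ 2 * (p * sa - q * sb) ^+ 2.
  by rewrite aE bE; ring.
by rewrite lerDl mulr_ge0 ?sqr_ge0.
Qed.

Section MergeSummands.
Variable R : realType.

Definition mi_summand (p px py : R) : R :=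
  if p == 0 then 0 else p * ln (p / (px * py)).

Lemma mi_summand_subr_le (a px py c : R) : 0 <= a -> 0 < px -> 0 < py -> 0 < c ->
  mi_summand a px py - a * ln c <= a * (a / (px * py) / c - 1).
Proof.
move=> a_ge0 px_gt0 py_gt0 c_gt0; rewrite /mi_summand.
have [->|a_neq0] := eqVneq a 0; first by rewrite !mul0r subr0.
have a_gt0 : 0 < a by rewrite lt_def a_neq0.
rewrite -mulrBr ler_wpM2l // -ln_div ?posrE ?divr_gt0 ?mulr_gt0 //.
have t_gt0 : 0 < a / (px * py) / c by rewrite !divr_gt0 ?mulr_gt0.
by have := @le_ln1Dx R (a / (px * py) / c - 1); rewrite subrKC; apply; lra.
Qed.

Lemma mi_summand_merge_le_chi2 (a b px p q : R) :
  0 <= a -> 0 <= b -> 0 < a + b -> 0 < px -> 0 < p -> 0 < q ->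
  mi_summand a px p + mi_summand b px q - mi_summand (a + b) px (p + q) <=
  a * (a * (p + q) / (p * (a + b)) - 1) + b * (b * (p + q) / (q * (a + b)) - 1).
Proof.
move=> a_ge0 b_ge0 ab_gt0 px_gt0 p_gt0 q_gt0.
set c := (a + b) / (px * (p + q)).
have c_gt0 : 0 < c by rewrite divr_gt0 // mulr_gt0 // addr_gt0.
have -> : mi_summand (a + b) px (p + q) = a * ln c + b * ln c.
  by rewrite /mi_summand gt_eqF // mulrDl.
have ratioE (x y : R) : 0 < y -> x / (px * y) / c = x * (p + q) / (y * (a + b)).
  by move=> y_gt0; rewrite /c; field; rewrite !gt_eqF // ?addr_gt0.
have := mi_summand_subr_le a_ge0 px_gt0 p_gt0 c_gt0.
have := mi_summand_subr_le b_ge0 px_gt0 q_gt0 c_gt0.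
rewrite !ratioE //; lra.
Qed.

Lemma mi_summand_merge_le (a b px p q : R) :
  0 <= a -> 0 <= b -> a + b <= px -> 0 < p -> 0 < q ->
  mi_summand a px p + mi_summand b px q - mi_summand (a + b) px (p + q) <=
  (p + q) * (Num.sqrt (a / p) - Num.sqrt (b / q)) ^+ 2.
Proof.
move=> a_ge0 b_ge0 ab_le p_gt0 q_gt0.
have [ab0|ab_neq0] := eqVneq (a + b) 0.
  have [-> ->] : a = 0 /\ b = 0 by split; lra.
  by rewrite /mi_summand addr0 eqxx !subr0 addr0 mulr_ge0 ?sqr_ge0 ?addr_ge0 ?ltW.
have ab_gt0 : 0 < a + b by rewrite lt_def ab_neq0 addr_ge0.
apply: le_trans (chi2_merge_le a_ge0 b_ge0 ab_gt0 p_gt0 q_gt0).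
exact: mi_summand_merge_le_chi2 (lt_le_trans ab_gt0 ab_le) p_gt0 q_gt0.
Qed.

End MergeSummands.

Lemma big_option (V : nmodType) (T : finType) (F : option T -> V) :
  \sum_(c : option T) F c = F None + \sum_y F (Some y).
Proof.
rewrite (bigD1 None) //=; congr (_ + _).
rewrite (reindex_omap Some id) /=; last by case.
by apply: eq_bigl => y; rewrite eqxx.
Qed.

Lemma mutual_infoE (R : realType) (A B : finType) (P : A -> B -> R) :
  mutual_info P = \sum_a \sum_b mi_summand (P a b) (margX P a) (margY P b).
Proof. by []. Qed.

Lemma margX_push_Y (R : realType) (A B C : finType) (f : B -> C) (P : A -> B -> R) a :
  margX (push_Y f P) a = margX P a.
Proof. by rewrite /margX /push_Y (partition_big f predT). Qed.

Lemma big_merged (V : nmodType) (n : nat) (i j : 'I_n) (F : 'I_n -> V) : i != j ->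
  \sum_(y | (y == i) || (y == j)) F y = F i + F j.
Proof.
move=> neq_ij; rewrite (bigD1 i) ?eqxx //=; congr (_ + _).
rewrite (eq_bigl (pred1 j)) ?big_pred1_eq // => y /=.
by case: (eqVneq y i) => [->|]; rewrite ?(negbTE neq_ij) ?andbF ?andbT //= eq_sym.
Qed.

Definition hellinger2 (R : realType) (A B : finType) (P : A -> B -> R) (y y' : B) : R :=
  \sum_a (Num.sqrt (P a y / margY P y) - Num.sqrt (P a y' / margY P y')) ^+ 2.

Section MergeSymbols.
Variables (R : realType) (A : finType) (n : nat) (i j : 'I_n).
Hypothesis neq_ij : i != j.

Variable P : A -> 'I_n -> R.
Local Notation Q := (push_Y (merge_sym i j) P).

Lemma push_merge_None a : Q a None = P a i + P a j.
Proof.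
rewrite /push_Y -(big_merged _ neq_ij); apply: eq_bigl => y.
by rewrite /merge_sym; case: ifP.
Qed.

Lemma push_merge_Some a y : Q a (Some y) = if (y == i) || (y == j) then 0 else P a y.
Proof.
rewrite /push_Y /merge_sym; case: ifP => hy.
  by rewrite big_pred0 // => b; case: ifP => // hb; apply/eqP => -[eb]; rewrite eb hy in hb.
rewrite (eq_bigl (pred1 y)) ?big_pred1_eq // => b /=.
case: (eqVneq b y) => [->|hb]; first by rewrite hy eqxx.
by case: ifP => //= _; apply/eqP => -[eb]; rewrite eb eqxx in hb.
Qed.

Lemma margY_push_merge_None : margY Q None = margY P i + margY P j.
Proof. by rewrite /margY -big_split; apply: eq_bigr => a _; rewrite push_merge_None. Qed.

Lemma margY_push_merge_Some y :
  margY Q (Some y) = if (y == i) || (y == j) then 0 else margY P y.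
Proof.
rewrite /margY; case: ifP => hy; last by apply: eq_bigr => a _; rewrite push_merge_Some hy.
by rewrite big1 // => a _; rewrite push_merge_Some hy.
Qed.

Lemma mutual_info_merge_loss :
  mutual_info P - mutual_info Q =
  \sum_a (mi_summand (P a i) (margX P a) (margY P i)
          + mi_summand (P a j) (margX P a) (margY P j)
          - mi_summand (P a i + P a j) (margX P a) (margY P i + margY P j)).
Proof.
rewrite !mutual_infoE -sumrB; apply: eq_bigr => a _.
rewrite big_option push_merge_None margY_push_merge_None margX_push_Y.
have -> : \sum_y mi_summand (Q a (Some y)) (margX P a) (margY Q (Some y)) =
    \sum_(y | ~~ ((y == i) || (y == j))) mi_summand (P a y) (margX P a) (margY P y).
  rewrite [RHS]big_mkcond; apply: eq_bigr => y _.
  by rewrite push_merge_Some margY_push_merge_Some; case: (_ || _); rewrite /mi_summand ?eqxx.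
rewrite (bigID (fun y => (y == i) || (y == j))) /= (big_merged _ neq_ij); ring.
Qed.

Hypothesis P_ge0 : forall a y, 0 <= P a y.

Lemma mutual_info_merge_loss_eq0 : margY P i = 0 -> mutual_info P - mutual_info Q = 0.
Proof.
move=> /psumr_eq0P Pi0; have {}Pi0 a : P a i = 0 by apply: Pi0.
rewrite mutual_info_merge_loss big1 // => a _.
rewrite /margY (eq_bigr _ (fun a _ => Pi0 a)) big1 // Pi0 !add0r.
by rewrite /mi_summand eqxx add0r subrr.
Qed.

Lemma mutual_info_merge_loss_le_hellinger : 0 < margY P i -> 0 < margY P j ->
  mutual_info P - mutual_info Q <= (margY P i + margY P j) * hellinger2 P i j.
Proof.
move=> pi_gt0 pj_gt0; rewrite mutual_info_merge_loss /hellinger2 mulr_sumr.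
apply: ler_sum => a _; apply: mi_summand_merge_le => //.
rewrite /margX (bigID (fun y => (y == i) || (y == j))) /= (big_merged _ neq_ij).
by rewrite lerDl sumr_ge0.
Qed.
End MergeSymbols.

Lemma quarter_circle_dist_le (R : realDomainType) (x1 y1 x2 y2 : R) :
  0 <= x1 -> 0 <= y1 -> 0 <= x2 -> 0 <= y2 ->
  x1 ^+ 2 + y1 ^+ 2 = 1 -> x2 ^+ 2 + y2 ^+ 2 = 1 ->
  (x1 - x2) ^+ 2 + (y1 - y2) ^+ 2 <= ((x1 - y1) - (x2 - y2)) ^+ 2.
Proof.
move=> x1_ge0 y1_ge0 x2_ge0 y2_ge0 c1 c2.
suff : (x1 - x2) * (y1 - y2) <= 0 by nra.
have [x21|x12] := lerP x2 x1; [have : y1 <= y2 by nra | have : y2 <= y1 by nra]; nra.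
Qed.

Section BinaryInput.
Variables (R : realType) (n : nat) (P : bool -> 'I_n -> R).

Definition sqrt_cond_gap (y : 'I_n) : R :=
  Num.sqrt (P true y / margY P y) - Num.sqrt (P false y / margY P y).

Hypothesis P_ge0 : forall b y, 0 <= P b y.

Lemma sqrt_cond_circle y : 0 < margY P y ->
  Num.sqrt (P true y / margY P y) ^+ 2 + Num.sqrt (P false y / margY P y) ^+ 2 = 1.
Proof.
move=> py_gt0; rewrite !sqr_sqrtr ?divr_ge0 ?(ltW py_gt0) // -mulrDl.
by rewrite [P true y + _](_ : _ = margY P y) ?divff ?gt_eqF // /margY big_bool.
Qed.

Lemma sqrt_cond_gap_itv y : 0 < margY P y -> -1 <= sqrt_cond_gap y <= 1.
Proof.
move=> /sqrt_cond_circle; rewrite /sqrt_cond_gap.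
have := sqrtr_ge0 (P true y / margY P y); have := sqrtr_ge0 (P false y / margY P y).
by move=> ? ? ?; apply/andP; split; nra.
Qed.

Lemma hellinger2_bool_le i j : 0 < margY P i -> 0 < margY P j ->
  hellinger2 P i j <= (sqrt_cond_gap i - sqrt_cond_gap j) ^+ 2.
Proof.
move=> /sqrt_cond_circle ci /sqrt_cond_circle cj.
by rewrite /hellinger2 big_bool; apply: quarter_circle_dist_le; rewrite ?sqrtr_ge0.
Qed.
End BinaryInput.

Lemma pigeonhole_close_pair (R : archiRealFieldType) (T : finType) (S : {set T}) (m : nat)
    (w : T -> R) :
  (0 < m)%N -> (m < #|S|)%N -> {in S, forall y, 0 <= w y <= m%:R} ->
  exists i j, [/\ i \in S, j \in S, i != j & `|w i - w j| <= 1].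
Proof.
case: m => // m _ mS w_itv.
pose bin y : 'I_m.+1 := inord (minn (Num.truncn (w y)) m).
have binP y : y \in S -> (bin y)%:R <= w y <= (bin y)%:R + 1.
  case/w_itv/andP => w_ge0 w_le; rewrite inordK ?ltnS ?geq_minr //.
  have /andP[t_le t_gt] := truncn_itv w_ge0.
  have [tm|mt] := leqP (Num.truncn (w y)) m.
    by rewrite t_le natr1 (ltW t_gt).
  have : (m%:R : R) <= (Num.truncn (w y))%:R by rewrite ler_nat ltnW.
  by move=> m_le_t; rewrite -natr1 in w_le; apply/andP; split; lra.
have /dinjectivePn [i iS [j /andP[/= neq_ji jS] eq_bin]] : ~~ dinjectiveb bin S.
  apply: contraTN mS => /dinjectiveP /leq_card_in.
  by rewrite card_ord leqNgt.
exists i, j; split; rewrite 1?eq_sym //.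
move: (binP i iS) (binP j jS); rewrite eq_bin => /andP[? ?] /andP[? ?].
by rewrite ler_norml; apply/andP; split; lra.
Qed.

Lemma exists_close_pair (R : archiRealFieldType) (T : finType) (S : {set T}) (m : nat)
    (z : T -> R) :
  (0 < m)%N -> (m < #|S|)%N -> {in S, forall y, -1 <= z y <= 1} ->
  exists i j, [/\ i \in S, j \in S, i != j & (z i - z j) ^+ 2 <= 4 / m%:R ^+ 2].
Proof.
move=> m_gt0 mS z_itv; have m_gt0' : (0 : R) < m%:R by rewrite ltr0n.
pose w y := (z y + 1) * m%:R / 2.
have w_itv : {in S, forall y, 0 <= w y <= m%:R}.
  by move=> y /z_itv/andP[? ?]; apply/andP; split; rewrite /w; nra.
have [i [j [iS jS neq_ij close]]] := pigeonhole_close_pair m_gt0 mS w_itv.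
exists i, j; split => //.
have -> : z i - z j = (w i - w j) * 2 / m%:R by rewrite /w; field; rewrite gt_eqF.
rewrite expr_div_n ler_pM2r ?invr_gt0 ?exprn_gt0 //.
by move: close; rewrite ler_norml => /andP[? ?]; nra.
Qed.

Lemma card_mass_gt_le (R : realDomainType) (T : finType) (p : T -> R) (t : R) :
  (forall y, 0 <= p y) -> \sum_y p y = 1 -> #|[set y | t < p y]|%:R * t <= 1.
Proof.
move=> p_ge0 p_sum1.
have : \sum_(y in [set y | t < p y]) p y <= 1.
  by rewrite -p_sum1 [leRHS](bigID (mem [set y | t < p y])) /= lerDl sumr_ge0.
apply: le_trans; rewrite -sum1_card natr_sum mulr_suml.
by apply: ler_sum => y; rewrite inE mul1r => /ltW.
Qed.

Lemma card_light_ge (R : realFieldType) (n : nat) (p : 'I_n -> R) :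
  (2 <= n)%N -> (forall y, 0 <= p y) -> \sum_y p y = 1 ->
  (n <= 2 * #|[set y | (p y <= 4 / n%:R)%R]|.-1)%N.
Proof.
move=> n_ge2 p_ge0 p_sum1; have n_gt0 : (0 : R) < n%:R by rewrite ltr0n; lia.
have : (4 * #|[set y | (4 / n%:R < p y)%R]| <= n)%N.
  have := card_mass_gt_le (4 / n%:R) p_ge0 p_sum1.
  by rewrite mulrA ler_pdivrMr // mul1r -natrM ler_nat mulnC.
have -> : [set y | 4 / n%:R < p y] = ~: [set y | p y <= 4 / n%:R].
  by apply/setP => y; rewrite !inE ltNge.
by have := cardsC [set y | p y <= 4 / n%:R]; rewrite card_ord; lia.
Qed.

Lemma light_pair_loss_le (R : realFieldType) (p q d x y : R) :
  0 < x -> x <= 2 * y -> 0 <= p <= 4 / x -> 0 <= q <= 4 / x -> 0 <= d <= 4 / y ^+ 2 ->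
  (p + q) * d <= 128 / x ^+ 3.
Proof.
move=> x_gt0 x_le /andP[p_ge0 p_le] /andP[q_ge0 q_le] /andP[d_ge0 d_le].
have y_gt0 : 0 < y by lra.
apply: (@le_trans _ _ (8 / x * (4 / y ^+ 2))).
  by apply: ler_pM; rewrite ?addr_ge0 //; lra.
have -> : 8 / x * (4 / y ^+ 2) = 128 / x ^+ 3 * (x ^+ 2 / (4 * y ^+ 2)).
  by field; rewrite !gt_eqF.
rewrite ler_piMr ?divr_ge0 ?exprn_ge0 ?(ltW x_gt0) //.
by rewrite ler_pdivrMr ?mul1r ?mulr_gt0 ?exprn_gt0 //; nra.
Qed.

Theorem theorem5 (R : realType) (n : nat) (hn : (2 <= n)%N)
  (P : bool -> 'I_n -> R) (hP : is_joint_pmf P) :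
  exists i j : 'I_n, i != j /\
    mutual_info P - mutual_info (push_Y (@merge_sym n i j) P)
      <= 128 / (n%:R ^+ 3).
Proof.
case: hP => P_ge0 P_sum1.
have pY_ge0 y : 0 <= margY P y by apply: sumr_ge0.
have n_gt0 : (0 : R) < n%:R by rewrite ltr0n; lia.
have [[y0 py0]|/forallNP pY_neq0] := pselect (exists y, margY P y = 0).
  have /card_gt0P [j] : (0 < #|[set~ y0]|)%N by rewrite cardsC1 card_ord; lia.
  rewrite in_setC1 => neq_jy0; exists y0, j; rewrite eq_sym neq_jy0.
  by rewrite mutual_info_merge_loss_eq0 1?eq_sym // divr_ge0 ?exprn_ge0 ?ltW.
have pY_gt0 y : 0 < margY P y by rewrite lt_def pY_ge0 andbT; apply/eqP.
have pY_sum1 : \sum_y margY P y = 1 by rewrite /margY exchange_big.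
have n_le_2m := card_light_ge hn pY_ge0 pY_sum1.
set S := [set y | _ <= _] in n_le_2m.
have m_gt0 : (0 < #|S|.-1)%N by lia.
have m_lt : (#|S|.-1 < #|S|)%N by lia.
have gap_itv : {in S, forall y, -1 <= sqrt_cond_gap P y <= 1}.
  by move=> y _; apply: sqrt_cond_gap_itv.
have [i [j [iS jS neq_ij close]]] := exists_close_pair m_gt0 m_lt gap_itv.
exists i, j; split => //.
apply: le_trans (mutual_info_merge_loss_le_hellinger neq_ij P_ge0 (pY_gt0 i) (pY_gt0 j)) _.
move: iS jS; rewrite !inE => pi_le pj_le.
apply: (light_pair_loss_le (y := (#|S|.-1)%:R)); rewrite ?pY_ge0 //.
  by rewrite -natrM ler_nat.
apply/andP; split; first by apply: sumr_ge0 => a _; apply: sqr_ge0.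
exact: le_trans (hellinger2_bool_le P_ge0 (pY_gt0 i) (pY_gt0 j)) close.
Qed.
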